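(* There exists a matroid $M$ and a shelling order $<$ of the independence complex $\mathcal{I}(M)$ such that the induced order $<_\bullet$ is not a shelling order of the dual matroid polytope $P_M^*$.
   Context: For a matroid $M$ on finite set $E$ with bases $\mathcal{B}(M)$, $\mathcal{I}(M)$ is the simplicial complex of independent sets. The matroid polytope is $P_M=\mathrm{conv}\{\chi_B: B\in\mathcal{B}(M)\}\subset\mathbb{R}^E$ ($\chi_B$ the characteristic vector of $B$), and $P_M^*$ is its dual polytope, whose facets $F_B$ correspond bijectively to the vertices $\chi_B$, i.e. to bases. For an order $<$ on $\mathcal{B}(M)$, $<_\bullet$ is the order $F_B<_\bullet F_{B'}$ iff $B<B'$. A shelling order of a pure simplicial complex is a total order $F_1<\dots<F_k$ of its facets such that for each $j\ge2$, $\langle F_1,\dots,F_{j-1}\rangle\cap\langle F_j\rangle$ is pure of dimension one less than the complex. A shelling of a polygon orders its edges so each edge after the first shares a vertex with an earlier one; a shelling of a polytope of dimension $\ge3$ is an order $F_1,\dots,F_k$ of facets such that for $j\ge2$, $F_j\cap\bigcup_{i<j}F_i$ is a union of facets of $F_j$ forming an initial segment of a shelling order of $F_j$. *)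

From mathcomp Require Import all_boot all_order all_algebra.
Set Implicit Arguments. Unset Strict Implicit. Unset Printing Implicit Defensive.
Import Order.TTheory GRing.Theory Num.Theory.

Definition is_matroid_bases (n : nat) (BB : {set {set 'I_n}}) : Prop :=
  BB != set0 /\
  forall B1 B2, B1 \in BB -> B2 \in BB ->
    forall x, x \in B1 :\: B2 ->
      exists2 y, y \in B2 :\: B1 & (y |: (B1 :\ x)) \in BB.

Definition pure_card (n : nat) (K : {set {set 'I_n}}) (m : nat) : Prop :=
  (forall S, S \in K -> exists2 T, T \in K & S \subset T /\ #|T| = m) /\
  (forall S, S \in K -> #|S| <= m).

(* The facets of I(M) are the bases.  s lists them in the order F_1 < ... < F_k;
   <F_1..F_{j-1}> ∩ <F_j> = subsets of F_j contained in some earlier F_i. *)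
Definition is_shelling_I (n : nat) (BB : {set {set 'I_n}}) (s : seq {set 'I_n}) : Prop :=
  uniq s /\ (forall B, B \in s <-> B \in BB) /\
  forall j, 0 < j < size s ->
    pure_card [set S : {set 'I_n} | (S \subset nth set0 s j) &&
                 [exists i : 'I_(size s), (i < j) && (S \subset nth set0 s i)]]
              (#|nth set0 s j|).-1.

(* Faces of P_M are encoded by their vertex sets, i.e. sets of bases. *)
Definition wsum (n : nat) (w : 'I_n -> rat) (B : {set 'I_n}) : rat := (\sum_(i in B) w i)%R.

(* nonempty faces of P_M = sets of vertices maximizing a linear functional *)
Definition is_face (n : nat) (BB : {set {set 'I_n}}) (X : {set {set 'I_n}}) : Prop :=
  exists w : 'I_n -> rat,
    X = [set B in BB | [forall B' in BB, (wsum w B' <= wsum w B)%R]].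

(* homogenized characteristic vector (1, chi_B) *)
Definition chi1 (n : nat) (B : {set 'I_n}) : 'rV[rat]_(n.+1) :=
  \row_(j < n.+1) (if unlift ord0 j is Some i then (i \in B)%:R else 1)%R.

(* frk X = 1 + affine dimension of conv{chi_B : B in X}  (0 for X empty) *)
Definition frk (n : nat) (X : {set {set 'I_n}}) : nat :=
  \rank (\sum_(B in X) <<chi1 B>>)%MS.

(* A face G of P_M corresponds to the face G^o of P_M^* (inclusion reversed,
   dim G^o = dim P_M - 1 - dim G); X = set0 encodes P_M^* itself.
   Facets of X^o  <->  faces Y of P_M covering X. *)
Definition is_dfacet (n : nat) (BB X Y : {set {set 'I_n}}) : Prop :=
  is_face BB Y /\ X \proper Y /\ frk Y = (frk X).+1.

(* dshell BB k X s : s is a shelling order of the facets of the face X^o of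
   P_M^*, where k = dim X^o.  Z^o ⊆ Y1^o ∩ Y2^o  iff  Y1 ∪ Y2 ⊆ Z. *)
Fixpoint dshell (n : nat) (BB : {set {set 'I_n}}) (k : nat)
    (X : {set {set 'I_n}}) (s : seq {set {set 'I_n}}) {struct k} : Prop :=
  uniq s /\ (forall Y, Y \in s <-> is_dfacet BB X Y) /\
  match k with
  | 0 => True
  | k1.+1 =>
    match k1 with
    | 0 => True
    | k2.+1 =>
      match k2 with
      | 0 => (* polygon: each edge after the first shares a vertex with an earlier one;
                vertices of P_M^* are Z^o for faces Z of P_M of dimension dim P_M - 1 *)
        forall j, 0 < j < size s ->
          exists2 i, i < j &
            exists Z, is_face BB Z /\ frk Z = (frk BB).-1 /\
                      nth set0 s i :|: nth set0 s j \subset Z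
      | _.+1 =>
        forall j, 0 < j < size s ->
          exists t : seq {set {set 'I_n}}, exists r : nat,
            dshell BB k1 (nth set0 s j) t /\ 0 < r <= size t /\
            (* F_j ∩ (∪_{i<j} F_i) = ∪_{l<r} G_l, compared face by face *)
            forall Z, is_face BB Z ->
              ((exists2 i, i < j & nth set0 s i :|: nth set0 s j \subset Z) <->
               (exists2 l, l < r & nth set0 t l \subset Z))
      end
    end
  end.

(* shelling of P_M^* (dim P_M^* = dim P_M = frk BB - 1); its facets F_B are
   encoded by the vertex faces [set B] of P_M. *)
Definition dual_polytope_shelling (n : nat) (BB : {set {set 'I_n}})
    (s : seq {set {set 'I_n}}) : Prop :=
  dshell BB (frk BB).-1 set0 s.

(* Take the uniform matroid U(2,4): its bases are the six 2-subsets of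
   {0,1,2,3}, I(M) is the complete graph K4 and P_M is the octahedron, so P_M^*
   is the cube, in which F_B and F_B' are opposite exactly when B' is the
   complement of B.  Listing the edges of K4 so that each one meets an earlier
   one gives a shelling of I(M), e.g. 02, 12, 13, 03, 01, 23.  In the induced
   order the fourth facet F_03 meets F_02 and F_13 but not the opposite facet
   F_12, so F_03 meets the earlier facets in two opposite edges of the square
   F_03, which are not an initial segment of any shelling of that square. *)

From mathcomp Require Import all_boot all_order all_algebra.
From mathcomp Require Import lra zify.
Set Implicit Arguments. Unset Strict Implicit. Unset Printing Implicit Defensive.
Import Order.TTheory GRing.Theory Num.Theory.

Section AffineRank.
Variable n : nat.
Local Open Scope ring_scope.
Implicit Types (X Y : {set {set 'I_n}}) (B : {set 'I_n}) (w : 'I_n -> rat).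

Local Notation span X := (\sum_(B in X) <<@chi1 n B>>)%MS.

Definition affine_form (M : rat) w : 'cV[rat]_n.+1 :=
  \col_(j < n.+1) (if unlift ord0 j is Some i then - w i else M).

Lemma chi1_affine_form B M w : chi1 B *m affine_form M w = (M - wsum w B)%:M.
Proof.
apply/matrixP => i j; rewrite !ord1 !mxE eqxx mulr1n big_ord_recl !mxE unlift_none mul1r.
rewrite /wsum -sumrN [X in _ = _ + X]big_mkcond; congr (_ + _); apply: eq_bigr => k _.
by rewrite !mxE liftK; case: (k \in B); rewrite ?mul1r ?mul0r ?oppr0.
Qed.

Lemma chi1_affine_form_eq0 B M w :
  (chi1 B *m affine_form M w == 0) = (wsum w B == M).
Proof.
by rewrite chi1_affine_form -scalemx1 scalemx_eq0 oner_eq0 orbF subr_eq0 eq_sym.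
Qed.

Lemma span_subset X Y : X \subset Y -> (span X <= span Y)%MS.
Proof.
move=> sXY; apply/sumsmx_subP => B XB.
exact: (sumsmx_sup B) (subsetP sXY B XB) _.
Qed.

Lemma span_kermx X (f : 'cV[rat]_n.+1) :
  {in X, forall B, chi1 B *m f = 0} -> (span X <= kermx f)%MS.
Proof. by move=> hX; apply/sumsmx_subP => B XB; rewrite genmxE; apply/sub_kermxP/hX. Qed.

Lemma frk_lt_affine X Y e M w : X \subset Y -> e \in Y ->
  {in X, forall B, wsum w B = M} -> wsum w e != M -> (frk X < frk Y)%N.
Proof.
move=> sXY eY hX; rewrite -chi1_affine_form_eq0 => he.
apply: rank_ltmx; rewrite ltmxE span_subset //=; apply: contra he => sYX.
have eX : (chi1 e <= span X)%MS.
  by apply: submx_trans sYX; rewrite (sumsmx_sup e) ?genmxE.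
apply/eqP/sub_kermxP/(submx_trans eX)/span_kermx => B /hX wB.
by apply/eqP; rewrite chi1_affine_form_eq0 wB.
Qed.

Lemma frk_le_uniform X k : (0 < k)%N -> {in X, forall B, #|B| = k} -> (frk X <= n)%N.
Proof.
move=> k_gt0 hX; set f := affine_form k%:R (fun=> 1).
have /mxrankS : (span X <= kermx f)%MS.
  apply: span_kermx => B /hX cB; apply/eqP.
  by rewrite chi1_affine_form_eq0 /wsum sumr_const cB.
have : (0 < \rank f)%N.
  rewrite lt0n mxrank_eq0; apply: contraTneq k_gt0 => /matrixP/(_ ord0 ord0).
  by rewrite !mxE unlift_none => /eqP; rewrite pnatr_eq0 => /eqP->.
rewrite /frk mxrank_ker; lia.
Qed.

Lemma frk_set1 B : frk [set B] = 1%N.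
Proof.
rewrite /frk big_set1 genmxE rank_rV; apply/eqP; rewrite eqb1.
by apply/eqP => /matrixP/(_ ord0 ord0); rewrite !mxE unlift_none => /eqP; rewrite oner_eq0.
Qed.

End AffineRank.

Section Faces.
Variable n : nat.
Local Open Scope ring_scope.
Implicit Types (BB X Y Z : {set {set 'I_n}}) (A B P Q : {set 'I_n}) (w : 'I_n -> rat).

Lemma face_sub BB Z : is_face BB Z -> Z \subset BB.
Proof. by case=> w ->; apply/subsetP => B; rewrite inE => /andP[]. Qed.

Lemma frk_proper_face BB X Y :
  is_face BB X -> X \proper Y -> Y \subset BB -> (frk X < frk Y)%N.
Proof.
move=> [w defX] /properP[sXY [e eY eX]] sYB.
have [X0 | [B0 B0X]] := set_0Vmem X.
  apply: (@frk_lt_affine _ _ _ _ (wsum w e + 1) w sXY eY) => [B|].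
    by rewrite X0 inE.
  by apply/eqP; lra.
have maxX B : B \in X -> forall B', B' \in BB -> wsum w B' <= wsum w B.
  by rewrite defX inE => /andP[_ /forall_inP].
have XBB := subsetP (face_sub (ex_intro _ w defX)).
apply: (@frk_lt_affine _ _ _ _ (wsum w B0) w sXY eY) => [B BX|].
  by apply/eqP; rewrite eq_le !maxX ?XBB.
move: eX; rewrite defX inE (subsetP sYB e eY) /= => /forall_inPn[B' B'BB].
by rewrite -ltNge => /lt_le_trans/(_ (maxX _ B0X _ B'BB))/lt_eqF ->.
Qed.

Lemma wsum_setC w A : wsum w A + wsum w (~: A) = wsum w setT.
Proof. by rewrite /wsum [RHS](big_setID A) /= setTI setDE setTI. Qed.

Lemma face_antipodal BB Z B : {in BB, forall B, ~: B \in BB} ->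
  is_face BB Z -> B \in Z -> ~: B \in Z -> Z = BB.
Proof.
move=> BBC [w ->]; rewrite !inE => /andP[BBB /forall_inP maxB] /andP[_ /forall_inP maxCB].
apply/setP => B'; rewrite inE; case B'BB: (B' \in BB) => //=.
apply/forall_inP => B'' B''BB.
have := wsum_setC w B; have := wsum_setC w B'.
have := maxB _ B''BB; have := maxCB _ (BBC _ B'BB); lra.
Qed.

Lemma wsum_indicator P B : wsum (fun i => (i \in P)%:R) B = #|B :&: P|%:R.
Proof.
rewrite /wsum (big_setID P) /= [X in _ + X]big1 ?addr0 => [|i]; last first.
  by rewrite inE => /andP[/negbTE ->].
by rewrite (eq_bigr (fun=> 1)) ?sumr_const // => i; rewrite inE => /andP[_ ->].
Qed.

Lemma face_incl_excl BB P Q B0 : B0 \in BB -> P \subset B0 -> [disjoint B0 & Q] ->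
  is_face BB [set B in BB | (P \subset B) && [disjoint B & Q]].
Proof.
move=> B0BB PB0 B0Q.
pose w i : rat := (i \in P)%:R - (i \in Q)%:R.
have wsumE B : wsum w B = #|B :&: P|%:R - #|B :&: Q|%:R.
  by rewrite /wsum sumrB -!wsum_indicator.
have cardIP B : #|B :&: P|%:R <= #|P|%:R :> rat.
  by rewrite ler_nat subset_leq_card ?subsetIr.
have wsum_le B : wsum w B <= #|P|%:R.
  by rewrite wsumE; have := cardIP B; have := ler0n rat #|B :&: Q|; lra.
have wsum_eq B : (wsum w B == #|P|%:R) = (P \subset B) && [disjoint B & Q].
  apply/eqP/andP => [wB | [PB BQ]]; last first.
    by rewrite wsumE (setIidPr PB) (disjoint_setI0 BQ) cards0 subr0.
  have := cardIP B; have := ler0n rat #|B :&: Q|; move: wB; rewrite wsumE => wB le0 leP.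
  have /eqP : #|B :&: P|%:R = #|P|%:R :> rat by lra.
  have /eqP : #|B :&: Q|%:R = 0 :> rat by lra.
  rewrite pnatr_eq0 eqr_nat cards_eq0 setI_eq0 => -> /eqP cardBP; split=> //.
  by apply/setIidPr; apply/eqP; rewrite eqEcard subsetIr cardBP leqnn.
exists w; apply/setP => B; rewrite !inE; case: (B \in BB) => //=.
rewrite -wsum_eq; apply/eqP/forall_inP => [-> B' _ | maxB]; first exact: wsum_le.
apply/eqP; rewrite eq_le wsum_le /=; apply: le_trans (maxB _ B0BB).
suff /eqP -> : wsum w B0 == #|P|%:R by [].
by rewrite wsum_eq PB0.
Qed.

Lemma face_set1 BB B0 : B0 \in BB -> is_face BB [set B0].
Proof.
move=> B0BB; suff <- : [set B in BB | (B0 \subset B) && [disjoint B & ~: B0]] = [set B0].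
  by apply: face_incl_excl B0BB (subxx _) _; rewrite -subsets_disjoint.
apply/setP => B; rewrite !inE -subsets_disjoint -eqEsubset eq_sym.
by case: eqP => [->|]; rewrite ?B0BB ?andbF.
Qed.

Lemma face_mem_nmem BB (p q : 'I_n) B0 : B0 \in BB -> p \in B0 -> q \notin B0 ->
  is_face BB [set B in BB | (p \in B) && (q \notin B)].
Proof.
move=> B0BB pB0 qB0.
suff -> : [set B in BB | (p \in B) && (q \notin B)] =
          [set B in BB | ([set p] \subset B) && [disjoint B & [set q]]].
  by apply: face_incl_excl B0BB _ _; rewrite ?sub1set // disjoint_sym disjoints1.
by apply/setP => B; rewrite !inE sub1set disjoint_sym disjoints1.
Qed.

Lemma face_nmem BB (q : 'I_n) B0 : B0 \in BB -> q \notin B0 ->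
  is_face BB [set B in BB | q \notin B].
Proof.
move=> B0BB qB0.
suff -> : [set B in BB | q \notin B] = [set B in BB | (set0 \subset B) && [disjoint B & [set q]]].
  by apply: face_incl_excl B0BB _ _; rewrite ?sub0set // disjoint_sym disjoints1.
by apply/setP => B; rewrite !inE sub0set disjoint_sym disjoints1.
Qed.

End Faces.

Lemma uniform_matroid_bases n k :
  k <= n -> is_matroid_bases [set B : {set 'I_n} | #|B| == k].
Proof.
move=> le_kn; split.
  apply/set0Pn; exists [set widen_ord le_kn i | i : 'I_k].
  by rewrite inE card_imset ?card_ord // => i j /(congr1 val) /= /val_inj.
move=> B1 B2; rewrite !inE => /eqP c1 /eqP c2 x xB12.
have /set0Pn[y yB21] : B2 :\: B1 != set0.
  rewrite -card_gt0 cardsD c2 -c1 setIC -cardsD card_gt0; apply/set0Pn; by exists x.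
exists y => //; move: yB21 xB12; rewrite !inE => /andP[yB1 _] /andP[_ xB1].
have := cardsD1 x B1; rewrite xB1 cardsU1 !inE negb_and yB1 orbT; lia.
Qed.

Lemma is_shelling_I_edges n (BB : {set {set 'I_n}}) (s : seq {set 'I_n}) :
  uniq s -> (forall B, B \in s <-> B \in BB) -> {in s, forall B : {set 'I_n}, #|B| = 2} ->
  (forall j, 0 < j < size s ->
     exists2 i, i < j & ~~ [disjoint nth set0 s i & nth set0 s j]) ->
  is_shelling_I BB s.
Proof.
move=> s_uniq s_BB s_card2 s_conn; do 2!split=> //; move=> j /andP[j_gt0 j_lt].
have card_s k : k < size s -> #|nth set0 s k| = 2 by move=> k_lt; apply/s_card2/mem_nth.
rewrite card_s //=; set K := [set S | _].
have K_small S : S \in K -> #|S| <= 1.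
  rewrite inE => /andP[Sj /existsP[i /andP[ij Si]]]; rewrite leqNgt; apply/negP => S2.
  have eqS k : k < size s -> S \subset nth set0 s k -> S = nth set0 s k.
    by move=> k_lt Sk; apply/eqP; rewrite eqEcard Sk card_s.
  have /eqP := etrans (esym (eqS _ (ltn_ord i) Si)) (eqS _ j_lt Sj).
  by rewrite nth_uniq // => /eqP ij'; rewrite ij' ltnn in ij.
split=> // S KS; have [S0 | [y Sy]] := set_0Vmem S; last first.
  by exists S => //; split=> //; apply/eqP; rewrite eqn_leq K_small // card_gt0; apply/set0Pn; exists y.
have [i ij /pred0Pn[x /andP[xi xj]]] := s_conn j (introT andP (conj j_gt0 j_lt)).
exists [set x]; last by rewrite S0 sub0set cards1.
rewrite /K inE sub1set; apply/andP; split; first exact: xj.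
by apply/existsP; exists (Ordinal (ltn_trans ij j_lt)); rewrite ij sub1set; exact: xi.
Qed.

Lemma proper_set1_subset_set2 (T : finType) (Y : {set T}) (u v : T) :
  [set v] \proper Y -> Y \subset [set u; v] -> Y = [set u; v].
Proof.
move=> /properP[vY [e eY]]; rewrite inE => nev Yuv.
move: (subsetP Yuv e eY); rewrite !inE (negbTE nev) orbF => /eqP eu.
by apply/eqP; rewrite eqEsubset Yuv subUset !sub1set -eu eY -sub1set vY.
Qed.

Section VertexFigure.
Variables (n : nat) (BB : {set {set 'I_n}}) (v : {set 'I_n}) (t : seq {set {set 'I_n}}).
Hypothesis BB_setC : {in BB, forall B, ~: B \in BB}.
Hypothesis frk_BB_gt0 : 0 < frk BB.
Hypothesis t_shelling : dshell BB 2 [set v] t.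

(* The polygon step at m puts t_m and an earlier edge t_i inside a facet Z of
   P_M; Z contains no antipodal pair, so t_i contains P and v and strictly
   contains t_m, which their equal ranks forbid. *)
Lemma vertex_figure_prefix_edge0 r m P : r <= size t ->
  (forall l, l < r -> [|| P \in nth set0 t l, ~: P \in nth set0 t l | ~: v \in nth set0 t l]) ->
  m < r -> nth set0 t m = [set P; v] -> m = 0.
Proof.
case: t_shelling => t_uniq [t_facet t_polygon] r_le prefix m_lt tm.
have [// | m_gt0] := posnP m; exfalso.
have m_size : m < size t := leq_trans m_lt r_le.
have facet k : k < size t -> is_dfacet BB [set v] (nth set0 t k).
  by move=> k_lt; apply/t_facet/mem_nth.
have [i im [Z [Zface [frkZ]]]] := t_polygon m (introT andP (conj m_gt0 m_size)).
rewrite subUset => /andP[tiZ tmZ].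
have Z_antipodal B : B \in Z -> ~: B \in Z -> False.
  move=> BZ CBZ; move: frkZ; rewrite (face_antipodal BB_setC Zface BZ CBZ); lia.
have vZ : v \in Z by apply: (subsetP tmZ); rewrite tm !inE eqxx orbT.
have PZ : P \in Z by apply: (subsetP tmZ); rewrite tm !inE eqxx.
have i_size : i < size t := ltn_trans im m_size.
have [ti_face [v_ti frk_ti]] := facet i i_size.
have [tm_face [_ frk_tm]] := facet m m_size.
case/or3P: (prefix i (ltn_trans im m_lt)) => [P_ti | CP_ti | Cv_ti]; last 2 first.
- by apply: Z_antipodal PZ (subsetP tiZ _ CP_ti).
- by apply: (@Z_antipodal (~: v)); [apply: (subsetP tiZ) | rewrite setCK].
have : frk (nth set0 t m) < frk (nth set0 t i).
  apply: frk_proper_face tm_face _ (face_sub ti_face).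
  rewrite properEneq tm subUset !sub1set P_ti -sub1set (proper_sub v_ti) andbT.
  by rewrite -tm nth_uniq // neq_ltn im orbT.
by rewrite frk_ti frk_tm ltnn.
Qed.

End VertexFigure.

Definition e0 : 'I_4 := @Ordinal 4 0 isT.
Definition e1 : 'I_4 := @Ordinal 4 1 isT.
Definition e2 : 'I_4 := @Ordinal 4 2 isT.
Definition e3 : 'I_4 := @Ordinal 4 3 isT.

Definition U24 : {set {set 'I_4}} := [set B : {set 'I_4} | #|B| == 2].

Definition b02 : {set 'I_4} := [set e0; e2].
Definition b12 : {set 'I_4} := [set e1; e2].
Definition b13 : {set 'I_4} := [set e1; e3].
Definition b03 : {set 'I_4} := [set e0; e3].
Definition b01 : {set 'I_4} := [set e0; e1].
Definition b23 : {set 'I_4} := [set e2; e3].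

Definition shelling_U24 : seq {set 'I_4} := [:: b02; b12; b13; b03; b01; b23].

(* Finset operations do not compute, so concrete sets are compared elementwise. *)
Ltac decide_U24 :=
  rewrite /shelling_U24 /b02 /b12 /b13 /b03 /b01 /b23 /= ?inE ?eqEsubset ?subUset ?sub1set ?inE ?cards2.

Lemma ord4P (x : 'I_4) : [\/ x = e0, x = e1, x = e2 | x = e3].
Proof.
by case: x => -[|[|[|[|]]]] // lt; [constructor 1|constructor 2|constructor 3|constructor 4];
  apply: val_inj.
Qed.

Lemma mem_shelling_U24 (B : {set 'I_4}) : (B \in shelling_U24) = (B \in U24).
Proof.
apply/idP/idP; first by move: B; apply/allP; decide_U24.
rewrite inE => /cards2P[x [y [xy ->]]]; move: xy.
by case: (ord4P x) => ->; case: (ord4P y) => -> // _; decide_U24.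
Qed.

Lemma U24_setC : {in U24, forall B, ~: B \in U24}.
Proof. by move=> B; rewrite !inE => /eqP cB; have := cardsC B; rewrite card_ord; lia. Qed.

Lemma setC_b02 : ~: b02 = b13.
Proof. by apply/setP => x; case: (ord4P x) => ->; decide_U24. Qed.

Lemma setC_b13 : ~: b13 = b02.
Proof. by rewrite -setC_b02 setCK. Qed.

Lemma setC_b03 : ~: b03 = b12.
Proof. by apply/setP => x; case: (ord4P x) => ->; decide_U24. Qed.

Lemma sep_U24_eq (p : pred {set 'I_4}) (A : {set {set 'I_4}}) :
  A \subset U24 -> all (fun B => p B == (B \in A)) shelling_U24 ->
  [set B in U24 | p B] = A.
Proof.
move=> AU /allP pA; apply/setP => B; rewrite inE.
case BU: (B \in U24) => /=; first by apply/eqP/pA; rewrite mem_shelling_U24.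
by apply/esym/negbTE; apply: contraFN BU => /(subsetP AU).
Qed.

Lemma face_U24_b02_b03 : is_face U24 [set b02; b03].
Proof.
rewrite -(@sep_U24_eq (fun B => (e0 \in B) && (e1 \notin B)) [set b02; b03]).
- by apply: (@face_mem_nmem _ _ _ _ b02); decide_U24.
- by rewrite subUset !sub1set; decide_U24.
- by decide_U24.
Qed.

Lemma face_U24_b13_b03 : is_face U24 [set b13; b03].
Proof.
rewrite -(@sep_U24_eq (fun B => (e3 \in B) && (e2 \notin B)) [set b13; b03]).
- by apply: (@face_mem_nmem _ _ _ _ b13); decide_U24.
- by rewrite subUset !sub1set; decide_U24.
- by decide_U24.
Qed.

Lemma frk_U24 : frk U24 = 4.
Proof.
apply/eqP; rewrite eqn_leq (@frk_le_uniform _ _ 2) //=; last by move=> B; rewrite inE => /eqP.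
pose edge := [set B in U24 | (e0 \in B) && (e1 \notin B)].
pose tri := [set B in U24 | e1 \notin B].
have edge_face : is_face U24 edge by apply: (@face_mem_nmem _ _ _ _ b02); decide_U24.
have tri_face : is_face U24 tri by apply: (@face_nmem _ _ _ b02); decide_U24.
have lt1 : frk [set b03] < frk edge.
  apply: frk_proper_face (face_set1 _) _ (face_sub edge_face); first by decide_U24.
  by apply/properP; split; [|exists b02]; rewrite ?sub1set; decide_U24.
have lt2 : frk edge < frk tri.
  apply: frk_proper_face edge_face _ (face_sub tri_face).
  apply/properP; split; last by exists b23; decide_U24.
  by apply/subsetP => B; rewrite !inE => /andP[-> /andP[_ ->]].
have lt3 : frk tri < frk U24.
  apply: (frk_proper_face tri_face) _ (subxx _).
  by apply/properP; split; [exact: face_sub tri_face | exists b01; decide_U24].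
by move: lt1 lt2 lt3; rewrite frk_set1; lia.
Qed.

Lemma shelling_I_U24 : is_shelling_I U24 shelling_U24.
Proof.
apply: is_shelling_I_edges => [||B|].
- by decide_U24.
- by move=> B; rewrite mem_shelling_U24.
- by rewrite mem_shelling_U24 inE => /eqP.
- case=> [|[|[|[|[|[|j]]]]]] //= _.
  + by exists 0 => //; apply/pred0Pn; exists e2; decide_U24.
  + by exists 1 => //; apply/pred0Pn; exists e1; decide_U24.
  + by exists 0 => //; apply/pred0Pn; exists e0; decide_U24.
  + by exists 0 => //; apply/pred0Pn; exists e0; decide_U24.
  + by exists 0 => //; apply/pred0Pn; exists e2; decide_U24.
Qed.

Lemma not_dual_shelling_U24 :
  ~ dual_polytope_shelling U24 [seq [set B] | B <- shelling_U24].
Proof.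
rewrite /dual_polytope_shelling frk_U24 => -[_ [_ shelling]].
have [t [r [t_shell [/andP[r_gt0 r_le] prefix]]]] := shelling 3 isT.
have {}t_shell : dshell U24 2 [set b03] t := t_shell.
have t_facet l : l < size t -> is_dfacet U24 [set b03] (nth set0 t l).
  by case: t_shell => _ [t_facet _] l_lt; apply/t_facet/mem_nth.
have prefix_meets l : l < r ->
    [|| b02 \in nth set0 t l, b12 \in nth set0 t l | b13 \in nth set0 t l].
  move=> l_lt; have [tl_face _] := t_facet l (leq_trans l_lt r_le).
  have [i] := (prefix _ tl_face).2 (ex_intro2 _ _ l l_lt (subxx _)).
  by case: i => [|[|[|]]] //= _; rewrite subUset sub1set => /andP[-> _]; rewrite ?orbT.
have edge_in_prefix i : i < 3 -> is_face U24 [set nth set0 shelling_U24 i; b03] ->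
    exists2 l, l < r & nth set0 t l = [set nth set0 shelling_U24 i; b03].
  move=> i_lt face_i.
  have sub_i : nth set0 [seq [set B] | B <- shelling_U24] i :|: [set b03] \subset
               [set nth set0 shelling_U24 i; b03].
    by rewrite (nth_map set0) // (ltn_trans i_lt).
  have [l l_lt tl_sub] := (prefix _ face_i).1 (ex_intro2 _ _ i i_lt sub_i).
  exists l => //; apply: proper_set1_subset_set2 tl_sub.
  by have [_ []] := t_facet l (leq_trans l_lt r_le).
have [la la_lt tla] : exists2 l, l < r & nth set0 t l = [set b02; b03] :=
  edge_in_prefix 0 isT face_U24_b02_b03.
have [lc lc_lt tlc] : exists2 l, l < r & nth set0 t l = [set b13; b03] :=
  edge_in_prefix 2 isT face_U24_b13_b03.
have frk_gt0 : 0 < frk U24 by rewrite frk_U24.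
have edge0 := vertex_figure_prefix_edge0 U24_setC frk_gt0 t_shell r_le.
case: (ltngtP la lc) => [la_lc | lc_la | eq_lac].
- suff lc0 : lc = 0 by rewrite lc0 ltn0 in la_lc.
  apply: (edge0 lc b13 _ lc_lt tlc) => l /prefix_meets.
  by rewrite setC_b13 setC_b03 => /or3P[] ->; rewrite ?orbT.
- suff la0 : la = 0 by rewrite la0 ltn0 in lc_la.
  apply: (edge0 la b02 _ la_lt tla) => l /prefix_meets.
  by rewrite setC_b02 setC_b03 => /or3P[] ->; rewrite ?orbT.
- by have := setU11 b02 [set b03]; rewrite -tla eq_lac tlc; decide_U24.
Qed.

Theorem proposition3p3 :
  exists (n : nat) (BB : {set {set 'I_n}}) (s : seq {set 'I_n}),
    is_matroid_bases BB /\ is_shelling_I BB s /\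
    ~ dual_polytope_shelling BB [seq [set B] | B <- s].
Proof.
exists 4, U24, shelling_U24; split; first exact: uniform_matroid_bases.
by split; [exact: shelling_I_U24 | exact: not_dual_shelling_U24].
Qed.
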